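(* Let $\alpha,\beta$ satisfy $0<\alpha<\beta<1$ and $\beta>2\sqrt{3\alpha}$. Then $\mathsf{unitaryBQP}_\alpha\neq\mathsf{unitaryBQP}_\beta$.
   Context: A partial isometry is $U=\tilde U\Pi$ with $\Pi$ a projector and $\tilde U$ an isometry; a channel completion of $U$ is a channel $\Phi$ with $\Phi(\Pi\rho\Pi)=U\Pi\rho\Pi U^\dagger$ for all $\rho$. A unitary synthesis problem is a sequence $\mathscr U=(U_x)_{x\in\{0,1\}^*}$ of partial isometries. A circuit family $(C_x)_x$ implements $\mathscr U$ with worst-case error $\delta$ if for every $x$ there is a channel completion $\Phi_x$ of $U_x$ with $\|C_x-\Phi_x\|_\diamond\le\delta(|x|)$ (diamond norm). $\mathsf{unitaryBQP}_\delta$ is the set of unitary synthesis problems implementable with worst-case error $\delta$ by a uniform polynomial-time quantum algorithm, i.e. a family of polynomial-size general quantum circuits (gates $H,\mathit{CNOT},T$, ancilla introduction, tracing out, standard-basis measurement) whose descriptions are computed from $x$ by a classical polynomial-time Turing machine. *)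

From mathcomp Require Import all_boot all_order all_algebra.
From mathcomp Require Import reals Rstruct complex mxtens.

Set Implicit Arguments.
Unset Strict Implicit.
Unset Printing Implicit Defensive.
Import Order.TTheory GRing.Theory Num.Theory.
Local Open Scope ring_scope.
Local Open Scope complex_scope.
Local Open Scope ring_scope.

Definition RR : rcfType := Rdefinitions.R.
Notation CC := (complex RR).

Definition adj {m n} (A : 'M[CC]_(m, n)) : 'M[CC]_(n, m) :=
  (map_mx Num.conj A)^T.

Definition unitary_mx {n} (U : 'M[CC]_n) : Prop := adj U *m U = 1%:M.

Definition partial_isometry {m n} (U : 'M[CC]_(m, n)) : Prop :=
  exists (Pi : 'M[CC]_n) (Ut : 'M[CC]_(m, n)),
    [/\ Pi *m Pi = Pi, adj Pi = Pi, adj Ut *m Ut = 1%:M & U = Ut *m Pi].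

Definition psd {n} (X : 'M[CC]_n) : Prop :=
  adj X = X /\ forall v : 'cV[CC]_n, 0 <= (adj v *m X *m v) 0 0.

(* (Psi (x) id_k) : 'M_(d1*k) -> 'M_(d2*k), index convention of mxtens
   (pair (a, r) <-> a * k + r). *)
Definition blk {d k} (r s : 'I_k) (X : 'M[CC]_(d * k)) : 'M[CC]_d :=
  \matrix_(a, b) X (mxtens_index (a, r)) (mxtens_index (b, s)).

Definition ext_id {d1 d2} (k : nat) (Psi : 'M[CC]_d1 -> 'M[CC]_d2)
  (X : 'M[CC]_(d1 * k)) : 'M[CC]_(d2 * k) :=
  \sum_(r < k) \sum_(s < k) (Psi (blk r s X) *t (delta_mx r s : 'M[CC]_k)).
Arguments ext_id {d1 d2} k Psi X.

Definition channel {d1 d2} (Phi : 'M[CC]_d1 -> 'M[CC]_d2) : Prop :=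
  [/\ (forall (a : CC) X Y, Phi (a *: X + Y) = a *: Phi X + Phi Y),
      (forall X, \tr (Phi X) = \tr X)
    & (forall k (X : 'M[CC]_(d1 * k)), psd X -> psd (ext_id k Phi X))].

(* trace norm: ||X||_1 <= c, i.e. the sum of the singular values of X
   (read off from a singular value decomposition) is at most c. *)
Definition trnorm_le {n} (X : 'M[CC]_n) (c : RR) : Prop :=
  exists (U V : 'M[CC]_n) (s : 'I_n -> RR),
    [/\ unitary_mx U, unitary_mx V, (forall i, 0 <= s i),
        X = U *m diag_mx (\row_i ((s i)%:C)%C) *m V
      & \sum_i s i <= c].

Definition diamond_le {d1 d2} (Psi : 'M[CC]_d1 -> 'M[CC]_d2) (delta : RR) : Prop :=
  forall X : 'M[CC]_(d1 * d1), trnorm_le X 1 -> trnorm_le (ext_id d1 Psi X) delta.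

(* channel completion of a partial isometry U; its projector is Pi = U^* U
   (uniquely determined by U = Ut Pi). *)
Definition channel_completion {m n} (Phi : 'M[CC]_n -> 'M[CC]_m)
  (U : 'M[CC]_(m, n)) : Prop :=
  channel Phi /\
  let Pi := adj U *m U in
  forall rho : 'M[CC]_n, Phi (Pi *m rho *m Pi) = U *m Pi *m rho *m Pi *m adj U.

(* General quantum circuits over {H, CNOT, T}, with ancillas, partial
   trace and standard-basis measurement.  A register of k qubits has
   dimension 2^k; qubit j is bit j of the basis index. *)
Inductive instr :=
| IH of nat
| IT of nat
| ICNOT of nat & nat     (* CNOT with control c, target t *)
| IAnc                   (* introduce a fresh ancilla |0> as qubit k *)
| ITr of nat
| IMeas of nat.

Definition dim_after (k : nat) (i : instr) : nat :=
  match i with IAnc => k.+1 | ITr _ => k.-1 | _ => k end.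

Definition instr_valid (k : nat) (i : instr) : bool :=
  match i with
  | IH j | IT j | ITr j | IMeas j => j < k
  | ICNOT c t => [&& c < k, t < k & c != t]
  | IAnc => true
  end%N.

Fixpoint outq (k : nat) (c : seq instr) : nat :=
  match c with [::] => k | i :: c' => outq (dim_after k i) c' end.

Fixpoint circ_valid (k : nat) (c : seq instr) : bool :=
  match c with
  | [::] => true
  | i :: c' => instr_valid k i && circ_valid (dim_after k i) c'
  end.

Definition bit (a j : nat) : bool := odd (a %/ 2 ^ j).

(* insert bit b at position j *)
Definition ins (a j : nat) (b : bool) : nat :=
  (a %/ 2 ^ j * 2 ^ j.+1 + b * 2 ^ j + a %% 2 ^ j)%N.

Definition mget {m n} (M : 'M[CC]_(m, n)) (a b : nat) : CC :=
  match (insub a : option 'I_m), (insub b : option 'I_n) with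
  | Some i, Some j => M i j
  | _, _ => 0
  end.

Definition sqrt2 : CC := (Num.sqrt (2 : RR))%:C%C.
Definition hadamard (x y : bool) : CC := (if x && y then -1 else 1) / sqrt2.
Definition tgate (x y : bool) : CC :=
  if x == y then (if x then (1 + 'i%C) / sqrt2 else 1) else 0.

Definition gate1 (k j : nat) (g : bool -> bool -> CC) : 'M[CC]_(2 ^ k) :=
  \matrix_(a, b)
    if [forall l : 'I_k, (l != j :> nat) ==> (bit a l == bit b l)]
    then g (bit a j) (bit b j) else 0.

Definition cnot (k c t : nat) : 'M[CC]_(2 ^ k) :=
  \matrix_(a, b)
    if [forall l : 'I_k, (l != t :> nat) ==> (bit a l == bit b l)]
       && (bit a t == addb (bit b t) (bit b c))
    then 1 else 0.

Definition conj_by {n} (G : 'M[CC]_n) (rho : 'M[CC]_n) := G *m rho *m adj G.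

Definition step (k : nat) (i : instr) (rho : 'M[CC]_(2 ^ k)) :
  'M[CC]_(2 ^ dim_after k i) :=
  match i return 'M[CC]_(2 ^ dim_after k i) with
  | IH j => conj_by (gate1 k j hadamard) rho
  | IT j => conj_by (gate1 k j tgate) rho
  | ICNOT c t => conj_by (cnot k c t) rho
  | IAnc => \matrix_(a, b)
       if bit a k || bit b k then 0 else mget rho (a %% 2 ^ k) (b %% 2 ^ k)
  | ITr j => \matrix_(a, b)
       \sum_(x : bool) mget rho (ins a j x) (ins b j x)
  | IMeas j => \matrix_(a, b) if bit a j == bit b j then rho a b else 0
  end.

Fixpoint run (k : nat) (c : seq instr) : 'M[CC]_(2 ^ k) -> 'M[CC]_(2 ^ outq k c) :=
  match c return 'M[CC]_(2 ^ k) -> 'M[CC]_(2 ^ outq k c) with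
  | [::] => fun rho => rho
  | i :: c' => fun rho => run c' (step i rho)
  end.

Definition circ_chan (n m : nat) (c : seq instr) (e : outq n c = m)
  (rho : 'M[CC]_(2 ^ n)) : 'M[CC]_(2 ^ m) :=
  castmx (f_equal (expn 2) e, f_equal (expn 2) e) (run c rho).

(* Binary descriptions of circuits (numbers in unary, prefix-free).   *)
Definition enc_nat (n : nat) : seq bool := rcons (nseq n true) false.

Definition enc_instr (i : instr) : seq bool :=
  match i with
  | IH j => [:: false; false; false] ++ enc_nat j
  | IT j => [:: false; false; true] ++ enc_nat j
  | ICNOT c t => [:: false; true; false] ++ enc_nat c ++ enc_nat t
  | IAnc => [:: false; true; true]
  | ITr j => [:: true; false; false] ++ enc_nat j
  | IMeas j => [:: true; false; true] ++ enc_nat j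
  end.

Definition enc_circ (n : nat) (c : seq instr) : seq bool :=
  enc_nat n ++ flatten (map enc_instr c).

Inductive move := MoveL | MoveR | Stay.

Record TM := mkTM {
  tm_q : nat;
  tm_start : 'I_tm_q.+1;
  tm_halt : 'I_tm_q.+1;
  tm_delta : 'I_tm_q.+1 -> option bool -> 'I_tm_q.+1 * option bool * move }.
Arguments tm_start t : clear implicits.
Arguments tm_halt t : clear implicits.
Arguments tm_delta t : clear implicits.

(* configuration: state, left part (reversed), scanned cell, right part *)
Definition config (M : TM) :=
  ('I_(tm_q M).+1 * seq (option bool) * option bool * seq (option bool))%type.

Definition tm_init (M : TM) (x : seq bool) : config M :=
  (tm_start M, [::], head None (map Some x), behead (map Some x)).

Definition tm_step (M : TM) (cf : config M) : config M :=
  let: (q, l, h, r) := cf in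
  if q == tm_halt M then cf else
  let: (q', w, mv) := tm_delta M q h in
  match mv with
  | MoveL => match l with
             | [::] => (q', [::], None, w :: r)
             | a :: l' => (q', l', a, w :: r) end
  | MoveR => match r with
             | [::] => (q', w :: l, None, [::])
             | a :: r' => (q', w :: l, a, r') end
  | Stay => (q', l, w, r)
  end.

Fixpoint somes (s : seq (option bool)) : seq bool :=
  match s with Some b :: s' => b :: somes s' | _ => [::] end.

(* M on input x halts within t steps with output y (the maximal
   non-blank word starting at the head) *)
Definition tm_computes_within (M : TM) (x : seq bool) (t : nat) (y : seq bool) : Prop :=
  let: (q, l, h, r) := iter t (@tm_step M) (tm_init M x) in
  q = tm_halt M /\ somes (h :: r) = y.

Record usp := USP {
  usp_n : seq bool -> nat;
  usp_m : seq bool -> nat;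
  usp_U : forall x, 'M[CC]_(2 ^ usp_m x, 2 ^ usp_n x) }.

Definition is_usp (P : usp) : Prop := forall x, partial_isometry (usp_U P x).

Definition implements (C : seq bool -> seq instr) (P : usp) (delta : nat -> RR) : Prop :=
  forall x, circ_valid (usp_n P x) (C x) /\
    exists e : outq (usp_n P x) (C x) = usp_m P x,
    exists Phi : 'M[CC]_(2 ^ usp_n P x) -> 'M[CC]_(2 ^ usp_m P x),
      channel_completion Phi (usp_U P x) /\
      diamond_le (fun rho => circ_chan e rho - Phi rho) (delta (size x)).

Definition poly_time_uniform (P : usp) (C : seq bool -> seq instr) : Prop :=
  exists (M : TM) (a k : nat), forall x,
    tm_computes_within M x (a * size x ^ k + a)%N (enc_circ (usp_n P x) (C x)).

Definition unitaryBQP (delta : nat -> RR) : usp -> Prop :=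
  fun P => is_usp P /\
    exists C : seq bool -> seq instr, poly_time_uniform P C /\ implements C P delta.

(* On input x the task is to prepare, from the empty register, the qubit state
   psi_b = c|0> + (-1)^b s|1> with s = beta/2, c = sqrt(1 - s^2).
   - Introducing one ancilla |0> implements it with diamond error 2s = beta,
     since |0><0| - psi_b psi_b^* is s times a unitary [diamond_anc].
   - A circuit with error alpha < c s outputs a state whose (0,1) entry is
     within alpha of (-1)^b c s, so its sign reveals b [readout_decodes].
   The bit b = diag_bit x defeats the circuit that machine number |x| (in an
   enumeration of all machines with time bounds, [tm_enum_surj]) prints on x. *)
From mathcomp Require Import all_boot all_order all_algebra.
From mathcomp Require Import reals Rstruct complex mxtens.
From mathcomp Require Import ring lra.
From Stdlib Require Import FunctionalExtensionality ClassicalEpsilon.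
Import Order.TTheory GRing.Theory Num.Theory.
Local Open Scope ring_scope.

Lemma adj_mul m n p (A : 'M[CC]_(m, n)) (B : 'M[CC]_(n, p)) :
  adj (A *m B) = adj B *m adj A.
Proof. by rewrite /adj map_mxM trmx_mul. Qed.

Lemma adjK m n (A : 'M[CC]_(m, n)) : adj (adj A) = A.
Proof. by apply/matrixP => i j; rewrite !mxE conjCK. Qed.

Lemma adj_tens m n p q (A : 'M[CC]_(m, n)) (B : 'M[CC]_(p, q)) :
  adj (A *t B) = adj A *t adj B.
Proof. by rewrite /adj map_mxT trmx_tens. Qed.

Lemma adj1 n : adj (1%:M : 'M[CC]_n) = 1%:M.
Proof. by apply/matrixP => i j; rewrite !mxE eq_sym conjC_nat. Qed.

Lemma adj_scale m n (a : CC) (M : 'M[CC]_(m, n)) : adj (a *: M) = Num.conj a *: adj M.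
Proof. by apply/matrixP => i j; rewrite !mxE rmorphM. Qed.

Lemma conj_realC (a : RR) : Num.conj (a%:C%C : CC) = a%:C%C.
Proof. by rewrite /Num.conj /= oppr0. Qed.

(* The block decomposition X = sum_{r,s} X_{rs} (x) |r><s| underlying
   ext_id: extending the identity map gives back X. *)
Lemma ext_id_id {d k} (X : 'M[CC]_(d * k)) : ext_id k id X = X.
Proof.
apply/matrixP => i j.
case: (mxtens_indexP i) => a r; case: (mxtens_indexP j) => b s.
rewrite /ext_id summxE (bigD1 r) //= summxE (bigD1 s) //=.
rewrite [X in _ + X]big1 => [|r' Hr']; last first.
  rewrite summxE big1 // => s' _.
  by rewrite tensmxE [delta_mx _ _ _ _]mxE eq_sym (negbTE Hr') mulr0.
rewrite big1 => [|s' Hs']; last first.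
  by rewrite tensmxE [delta_mx _ _ _ _]mxE eqxx /= eq_sym (negbTE Hs') mulr0.
by rewrite tensmxE !mxE !eqxx mulr1 !addr0.
Qed.

Definition iso_chan {m n} (V : 'M[CC]_(m, n)) (rho : 'M[CC]_n) : 'M[CC]_m :=
  V *m rho *m adj V.

Lemma ext_iso_chan m n k (V : 'M[CC]_(m, n)) (X : 'M[CC]_(n * k)) :
  ext_id k (iso_chan V) X = (V *t 1%:M) *m X *m adj (V *t 1%:M).
Proof.
rewrite -[in RHS](ext_id_id X) /ext_id mulmx_sumr mulmx_suml; apply: eq_bigr => r _.
rewrite mulmx_sumr mulmx_suml; apply: eq_bigr => s _.
by rewrite adj_tens adj1 !tensmx_mul mulmx1 mul1mx.
Qed.

Lemma psd_conj m n (B : 'M[CC]_(m, n)) (X : 'M[CC]_n) :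
  psd X -> psd (B *m X *m adj B).
Proof.
move=> [HX1 HX2]; split; first by rewrite !adj_mul adjK HX1 mulmxA.
by move=> v; have := HX2 (adj B *m v); rewrite adj_mul adjK !mulmxA.
Qed.

Lemma iso_chan_channel m n (V : 'M[CC]_(m, n)) :
  adj V *m V = 1%:M -> channel (iso_chan V).
Proof.
move=> HV; split.
- by move=> a X Y; rewrite /iso_chan mulmxDr mulmxDl -scalemxAr -scalemxAl.
- by move=> X; rewrite /iso_chan mxtrace_mulC mulmxA HV mul1mx.
- by move=> k X HX; rewrite ext_iso_chan; apply: psd_conj.
Qed.

Lemma iso_chan_completion m n (V : 'M[CC]_(m, n)) :
  adj V *m V = 1%:M -> channel_completion (iso_chan V) V.
Proof.
move=> HV; split; first exact: iso_chan_channel.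
by move=> Pi rho; rewrite {}/Pi /iso_chan HV !mulmx1 mul1mx.
Qed.

Lemma completion_of_isometry m n (V : 'M[CC]_(m, n)) (Phi : 'M[CC]_n -> 'M[CC]_m) :
  adj V *m V = 1%:M -> channel_completion Phi V -> forall rho, Phi rho = iso_chan V rho.
Proof. by move=> HV [_ HPhi] rho; have := HPhi rho; rewrite /= HV mul1mx !mulmx1. Qed.

Lemma iso_partial_isometry m n (V : 'M[CC]_(m, n)) :
  adj V *m V = 1%:M -> partial_isometry V.
Proof. by move=> HV; exists 1%:M, V; split; rewrite ?mulmx1 ?adj1. Qed.

(* Columns of a unitary matrix are unit vectors, so its entries are bounded by 1. *)
Lemma unitary_entry n (U : 'M[CC]_n) i j : unitary_mx U -> `|U i j| <= 1.
Proof.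
move=> HU.
have col_norm : \sum_l `|U l j| ^+ 2 = 1.
  have := congr1 (fun M : 'M[CC]_n => M j j) HU; rewrite !mxE eqxx /= => col_j.
  by rewrite -[RHS]col_j; apply: eq_bigr => l _; rewrite !mxE normCKC.
have sq_le1 : `|U i j| ^+ 2 <= 1.
  rewrite -col_norm (bigD1 i) //= lerDl; apply: sumr_ge0 => l _; exact: exprn_ge0.
by rewrite -(@ler_pXn2r _ 2) ?expr1n // nnegrE.
Qed.

Lemma trnorm_entry n (Y : 'M[CC]_n) c i j : trnorm_le Y c -> `|Y i j| <= c%:C%C.
Proof.
move=> [U [V [s [HU HV Hs -> Hc]]]].
rewrite mul_mx_diag !mxE; apply: (le_trans (ler_norm_sum _ _ _)).
apply: (@le_trans _ _ (\sum_l (s l)%:C%C)); last by rewrite -rmorph_sum lecR.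
apply: ler_sum => l _; rewrite !mxE !normrM [`|(s l)%:C%C|]ger0_norm ?ler0c // mulrAC.
by rewrite ler_piMl ?ler0c ?mulr_ile1 ?unitary_entry.
Qed.

Lemma trnorm_le_weaken n (Y : 'M[CC]_n) c c' : trnorm_le Y c -> c <= c' -> trnorm_le Y c'.
Proof.
move=> [U [V [s [HU HV Hs HY Hc]]]] le_cc'.
by exists U, V, s; split => //; apply: le_trans le_cc'.
Qed.

Lemma complex_phase (z : CC) : exists2 ph, Num.conj ph * ph = 1 & z = ph * `|z|.
Proof.
have [->|z0] := eqVneq z 0; first by exists 1; rewrite ?conjC1 ?mulr1 ?mul1r ?normr0.
have nz0 : `|z| != 0 by rewrite normr_eq0.
exists (z / `|z|); last by rewrite divfK.
by rewrite -normCKC normrM normfV normr_id divff ?expr1n.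
Qed.

(* z W with W unitary has all singular values |z|, hence trace norm n |z|. *)
Lemma trnorm_scaled_unitary n (W : 'M[CC]_n) (z : CC) (r : RR) :
  unitary_mx W -> `|z| = r%:C%C -> trnorm_le (z *: W) (n%:R * r).
Proof.
move=> HW Hr; have [ph Hph Hz] := complex_phase z.
have r_ge0 : 0 <= r by have := normr_ge0 z; rewrite Hr -(rmorph0 (real_complex RR)) lecR.
exists (ph *: W), 1%:M, (fun=> r); split => //.
- by rewrite /unitary_mx adj_scale -scalemxAl -scalemxAr scalerA Hph scale1r.
- by rewrite /unitary_mx adj1 mulmx1.
- apply/matrixP => i j; rewrite mulmx1 mul_mx_diag !mxE Hz Hr; ring.
- by rewrite sumr_const card_ord mulr_natl.
Qed.

Lemma trnorm_one : trnorm_le (1%:M : 'M[CC]_(2 ^ 0 * 2 ^ 0)) 1.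
Proof.
have := @trnorm_scaled_unitary (2 ^ 0 * 2 ^ 0) 1%:M 1 1.
rewrite scale1r mulr1 normr1 rmorph1; apply => //.
by rewrite /unitary_mx adj1 mulmx1.
Qed.

Lemma Re_near (z : CC) (a e : RR) :
  `|z - a%:C%C| <= e%:C%C -> a - e <= complex.Re z <= a + e.
Proof.
case: z => x y /(le_trans (normc_ge_Re _)); rewrite lecR /= ler_norml.
by case/andP => lo hi; apply/andP; split; lra.
Qed.

(* Maps from a zero-qubit register to one qubit: the reference system of the
   diamond norm is trivial, and the input of trace norm 1 gives an entrywise
   bound on the output. *)

Lemma ext_id_scalar (Psi : 'M[CC]_(2 ^ 0) -> 'M[CC]_(2 ^ 1)) (X : 'M[CC]_(2 ^ 0 * 2 ^ 0)) :
  ext_id (2 ^ 0) Psi X = Psi X.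
Proof.
have blk_X : blk ord0 ord0 X = X.
  by apply/matrixP => i j; rewrite !mxE !ord1; congr (X _ _); apply: val_inj.
apply/matrixP => i j; rewrite /ext_id !big_ord1 blk_X.
case: (mxtens_indexP i) => a r; case: (mxtens_indexP j) => b s.
rewrite tensmxE !ord1 mxE eqxx mulr1.
by congr (Psi X _ _); apply: val_inj; rewrite /= muln1 addn0.
Qed.

Lemma diamond_entry (Psi : 'M[CC]_(2 ^ 0) -> 'M[CC]_(2 ^ 1)) d i j :
  diamond_le Psi d -> `|Psi 1%:M i j| <= d%:C%C.
Proof. by move=> Hd; have := Hd _ trnorm_one; rewrite ext_id_scalar; apply: trnorm_entry. Qed.

Lemma anc_chan (rho : 'M[CC]_(2 ^ 0)) :
  circ_chan (erefl : outq 0 [:: IAnc] = 1%N) rho = rho 0 0 *: delta_mx 0 0.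
Proof.
have ins0 : insub 0%N = Some (0 : 'I_(2 ^ 0)).
  by rewrite insubT //; congr Some; apply: val_inj.
have mod1 k : (k %% 2 ^ 0 = 0)%N by rewrite expn0 modn1.
apply/matrixP => i j; rewrite /circ_chan castmx_id /= !mxE /mget !mod1 ins0.
by case: i => [[|[|//]] ?]; case: j => [[|[|//]] ?]; rewrite /= ?mulr1 ?mulr0.
Qed.

Lemma iso_chan_scalar m (V : 'M[CC]_(m, 2 ^ 0)) (rho : 'M[CC]_(2 ^ 0)) :
  iso_chan V rho = rho 0 0 *: (V *m adj V).
Proof.
have rho_scalar : rho = rho 0 0 *: 1%:M.
  by apply/matrixP => i j; rewrite !ord1 !mxE eqxx mulr1.
by rewrite /iso_chan {1}rho_scalar -scalemxAr mulmx1 -scalemxAl.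
Qed.

Lemma circ_chan_mget n m c (e : outq n c = m) rho (i j : 'I_(2 ^ m)) :
  circ_chan e rho i j = mget (run c rho) i j.
Proof. by case: m / e i j => i j; rewrite /circ_chan castmx_id /mget !valK. Qed.

Definition readout (c : seq instr) : CC := mget (@run 0 c 1%:M) 0 1.

Section TargetState.
Variable beta : RR.
Hypothesis beta01 : 0 <= beta <= 1.

Definition amp1 : RR := beta / 2.
Definition amp0 : RR := Num.sqrt (1 - amp1 ^+ 2).

Lemma amp0_sq : amp0 ^+ 2 = 1 - amp1 ^+ 2.
Proof. by rewrite /amp0 sqr_sqrtr // subr_ge0 /amp1; case/andP: beta01 => *; nra. Qed.

Lemma amp0_sqC : amp0%:C%C * amp0%:C%C = 1 - amp1%:C%C * amp1%:C%C :> CC.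
Proof. by rewrite -!rmorphM -rmorphB /= -!expr2 amp0_sq. Qed.

Definition psi (b : bool) : 'M[CC]_(2 ^ 1, 2 ^ 0) :=
  \matrix_(i, j) (if (i : nat) == 0%N then amp0%:C else (if b then - amp1 else amp1)%:C)%C.

Lemma psi_iso b : adj (psi b) *m psi b = 1%:M.
Proof.
apply/matrixP => i j; rewrite !ord1 !mxE big_ord_recl big_ord_recl big_ord0 !mxE /=.
by rewrite !conj_realC amp0_sqC; case: b; rewrite ?rmorphN; ring.
Qed.

(* The reflection with |0><0| - psi_b psi_b^* = amp1 gap_mx b. *)
Definition gap_mx (b : bool) : 'M[CC]_(2 ^ 1) :=
  \matrix_(i, j) (if (i : nat) == j then (if (i : nat) == 0%N then amp1 else - amp1)
                  else (if b then amp0 else - amp0))%:C%C.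

Lemma gap_mx_unitary b : unitary_mx (gap_mx b).
Proof.
rewrite /unitary_mx; apply/matrixP => i j.
rewrite !mxE big_ord_recl big_ord_recl big_ord0 !mxE.
case: i => [[|[|//]] ?]; case: j => [[|[|//]] ?]; rewrite /= !conj_realC.
all: by case: b; rewrite ?rmorphN ?mulrNN ?amp0_sqC; ring.
Qed.

Lemma state_gap b : delta_mx 0 0 - psi b *m adj (psi b) = amp1%:C%C *: gap_mx b.
Proof.
apply/matrixP => i j; rewrite !mxE big_ord1 !mxE /=.
case: i => [[|[|//]] ?]; case: j => [[|[|//]] ?]; rewrite /= ?conj_realC.
all: by case: b; rewrite ?rmorphN ?amp0_sqC; ring.
Qed.

Lemma diamond_anc b :
  diamond_le (fun rho => circ_chan (erefl : outq 0 [:: IAnc] = 1%N) rho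
                         - iso_chan (psi b) rho) beta.
Proof.
move=> X HX; rewrite ext_id_scalar anc_chan iso_chan_scalar -scalerBr state_gap scalerA.
have [r Hr] : exists r, `|X 0 0| = r%:C%C by eexists; apply: normc_def.
have r_ge0 : 0 <= r by have := normr_ge0 (X 0 0); rewrite Hr -(rmorph0 (real_complex RR)) lecR.
have r_le1 : r <= 1 by have := @trnorm_entry _ _ _ 0 0 HX; rewrite Hr lecR.
have amp1_ge0 : 0 <= amp1 by rewrite /amp1; case/andP: beta01 => *; lra.
apply: trnorm_le_weaken (@trnorm_scaled_unitary _ _ _ (r * amp1) (gap_mx_unitary b) _) _.
  by rewrite normrM Hr ger0_norm ?ler0c // -rmorphM.
by rewrite expn1 /amp1; case/andP: beta01 => *; nra.
Qed.

Lemma psi_outer b : (psi b *m adj (psi b)) 0 (@Ordinal (2 ^ 1) 1 isT)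
  = (if b then - (amp0 * amp1) else amp0 * amp1)%:C%C.
Proof. by rewrite !mxE big_ord1 !mxE /= conj_realC -rmorphM; case: b; rewrite ?mulrN. Qed.

Lemma readout_decodes {b c} {e : outq 0 c = 1%N} {Phi al} :
  al < amp0 * amp1 -> channel_completion Phi (psi b) ->
  diamond_le (fun rho => circ_chan e rho - Phi rho) al ->
  (0 <= complex.Re (readout c)) = ~~ b.
Proof.
move=> al_lt Hc /(@diamond_entry _ _ 0 (@Ordinal (2 ^ 1) 1 isT)).
rewrite !mxE (@completion_of_isometry _ _ _ _ (psi_iso b) Hc) iso_chan_scalar.
rewrite [_ 0 0]mxE eqxx scale1r psi_outer circ_chan_mget => /Re_near /andP[lo hi].
by case: b {Hc} lo hi => /= lo hi; [apply/negbTE; rewrite -ltNge | apply/idP]; nra.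
Qed.

End TargetState.

(* A machine that ignores its input and prints enc_circ 0 [:: IAnc] =
   0011 (it blanks the fifth cell and walks back to the start). *)
Definition anc_tm_delta (q : 'I_9) (h : option bool) : 'I_9 * option bool * move :=
  match val q with
  | 0 => (@Ordinal 9 1 isT, Some false, MoveR)
  | 1 => (@Ordinal 9 2 isT, Some false, MoveR)
  | 2 => (@Ordinal 9 3 isT, Some true, MoveR)
  | 3 => (@Ordinal 9 4 isT, Some true, MoveR)
  | 4 => (@Ordinal 9 5 isT, None, MoveL)
  | 5 => (@Ordinal 9 6 isT, h, MoveL)
  | 6 => (@Ordinal 9 7 isT, h, MoveL)
  | 7 => (@Ordinal 9 8 isT, h, MoveL)
  | _ => (@Ordinal 9 8 isT, h, Stay)
  end%N.

Definition anc_tm : TM := @mkTM 8 (@Ordinal 9 0 isT) (@Ordinal 9 8 isT) anc_tm_delta.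

Lemma anc_tm_computes x : tm_computes_within anc_tm x 8 (enc_circ 0 [:: IAnc]).
Proof. by case: x => [|b0 [|b1 [|b2 [|b3 [|b4 x]]]]]; vm_compute; split. Qed.

Lemma tm_output_unique {M x t y1 y2} :
  tm_computes_within M x t y1 -> tm_computes_within M x t y2 -> y1 = y2.
Proof.
by rewrite /tm_computes_within; case: (iter _ _ _) => [[[q l] h] r] [_ <-] [_ <-].
Qed.

(* The circuit encoding is prefix-free, hence injective: a machine's output
   determines the circuit it describes. *)

Lemma enc_nat_cat n m s t : enc_nat n ++ s = enc_nat m ++ t -> n = m /\ s = t.
Proof. by elim: n m => [|n IH] [|m] //= [] // /IH [-> ->]. Qed.

Lemma enc_instr_cat i j s t : enc_instr i ++ s = enc_instr j ++ t -> i = j /\ s = t.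
Proof.
case: i => [a|a|a1 a2||a|a]; case: j => [b|b|b1 b2||b|b] /= H; try by case: H.
all: try by case: H => /enc_nat_cat [-> ->].
by case: H; rewrite -!catA => /enc_nat_cat [-> /enc_nat_cat [-> ->]].
Qed.

Lemma enc_circ_inj {n c1 c2} : enc_circ n c1 = enc_circ n c2 -> c1 = c2.
Proof.
move/enc_nat_cat => [_]; elim: c1 c2 => [|i c1 IH] [|j c2] //=.
- by case: j.
- by case: i.
- by move/enc_instr_cat => [-> /IH ->].
Qed.

(* An enumeration of all triples (machine, a, k): a machine with q+1 states is
   coded by an element of the finite type tm_code q, and the triple is read
   off from a countable encoding of (q, rank of the code, a, k). *)

Definition tm_code (q : nat) : finType :=
  ('I_q.+1 * 'I_q.+1 * {ffun 'I_q.+1 * option bool -> 'I_q.+1 * option bool * 'I_3})%type.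

Definition move_of_ord (o : 'I_3) : move :=
  match val o with 0 => MoveL | 1 => MoveR | _ => Stay end%N.

Definition ord_of_move (mv : move) : 'I_3 :=
  match mv with
  | MoveL => @Ordinal 3 0 isT | MoveR => @Ordinal 3 1 isT | Stay => @Ordinal 3 2 isT
  end.

Lemma ord_of_moveK : cancel ord_of_move move_of_ord. Proof. by case. Qed.

Definition tm_of_code {q : nat} (z : tm_code q) : TM :=
  let: (st, hl, g) := z in
  @mkTM q st hl (fun p h => let: (q', w, mv) := g (p, h) in (q', w, move_of_ord mv)).

Definition tm_code0 (q : nat) : tm_code q := (ord0, ord0, [ffun=> (ord0, None, ord0)]).

Definition tm_enum (n : nat) : TM * nat * nat :=
  match (unpickle n : option (nat * nat * nat * nat)) with
  | Some (q, i, a, k) => (tm_of_code (nth (tm_code0 q) (enum (tm_code q)) i), a, k)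
  | None => (tm_of_code (tm_code0 0), 0%N, 0%N)
  end.

Lemma tm_enum_surj M a k : exists n, tm_enum n = (M, a, k).
Proof.
case: M => q st hl d.
pose z : tm_code q :=
  (st, hl, [ffun p => let: (q', w, mv) := d p.1 p.2 in (q', w, ord_of_move mv)]).
exists (pickle (q, index z (enum (tm_code q)), a, k)).
rewrite /tm_enum pickleK nth_index ?mem_enum //=; congr (_, _, _); congr mkTM.
apply: functional_extensionality => p; apply: functional_extensionality => h.
by rewrite ffunE /=; case: (d p h) => [[q' w] mv]; rewrite ord_of_moveK.
Qed.

(* The diagonal problem: on x, machine number |x| run for a|x|^k + a steps
   prints a circuit c; diag_bit x is set exactly when readout c has a
   nonnegative real part, which by readout_decodes means c decodes ~~ b. *)

Definition diag_pred (x : seq bool) : Prop :=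
  let: (M, a, k) := tm_enum (size x) in
  exists c, tm_computes_within M x (a * size x ^ k + a) (enc_circ 0 c) /\
            0 <= complex.Re (readout c).

Definition diag_bit (x : seq bool) : bool :=
  if excluded_middle_informative (diag_pred x) then true else false.

Definition diag_problem (beta : RR) : usp :=
  @USP (fun _ => 0%N) (fun _ => 1%N) (fun x => psi beta (diag_bit x)).

Lemma diag_problem_in (beta : RR) :
  0 <= beta <= 1 -> unitaryBQP (fun _ => beta) (diag_problem beta).
Proof.
move=> beta01; split; first by move=> x; apply/iso_partial_isometry/psi_iso.
exists (fun _ => [:: IAnc]); split.
  by exists anc_tm, 4%N, 0%N => x; rewrite expn0; apply: anc_tm_computes.
move=> x; split => //; exists erefl, (iso_chan (psi beta (diag_bit x))); split.
  exact/iso_chan_completion/psi_iso.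
exact: diamond_anc.
Qed.

Lemma diag_problem_notin {alpha beta : RR} :
  0 <= beta <= 1 -> alpha < amp0 beta * amp1 beta ->
  ~ unitaryBQP (fun _ => alpha) (diag_problem beta).
Proof.
move=> beta01 gap [_ [C [[M [a [k HM]]] HC]]].
have [n Hn] := tm_enum_surj M a k.
pose x := nseq n true; have size_x : size x = n by rewrite size_nseq.
have [_ [e [Phi [Hcompl Hdiam]]]] := HC x.
have decode := readout_decodes _ beta01 gap Hcompl Hdiam.
have pred_iff : diag_pred x <-> 0 <= complex.Re (readout (C x)).
  have HMx := HM x; rewrite /diag_pred size_x Hn; rewrite size_x in HMx; split.
    by move=> [c [Hc ?]]; rewrite -(enc_circ_inj (tm_output_unique Hc HMx)).
  by move=> ?; exists (C x).
move: decode; rewrite /diag_bit; case: excluded_middle_informative => [/pred_iff -> // | Hnot].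
by move/idP/pred_iff/Hnot.
Qed.

(* beta^2 > 12 alpha and beta < 1 give amp0 >= 1/2 and beta > 12 alpha,
   so amp0 amp1 >= beta/4 > alpha. *)
Lemma gap_below_amplitude {alpha beta : RR} :
  0 < alpha -> beta < 1 -> 2 * Num.sqrt (3 * alpha) < beta ->
  alpha < amp0 beta * amp1 beta.
Proof.
move=> alpha_gt0 beta_lt1 beta_gt.
set s := Num.sqrt (3 * alpha) in beta_gt.
have s_ge0 : 0 <= s := sqrtr_ge0 _.
have beta01 : 0 <= beta <= 1 by apply/andP; split; lra.
have s_sq : s ^+ 2 = 3 * alpha by rewrite sqr_sqrtr //; lra.
have beta_sq : 12 * alpha < beta ^+ 2 by nra.
have amp0_half : 1 / 2 <= amp0 beta.
  have := amp0_sq _ beta01; have : 0 <= amp0 beta := sqrtr_ge0 _; rewrite /amp1; nra.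
rewrite /amp1; nra.
Qed.

Theorem mainTheorem6 (alpha beta : RR) :
  0 < alpha -> alpha < beta -> beta < 1 -> 2 * Num.sqrt (3 * alpha) < beta ->
  unitaryBQP (fun _ => alpha) <> unitaryBQP (fun _ => beta).
Proof.
move=> alpha_gt0 _ beta_lt1 beta_gt same_class.
have beta01 : 0 <= beta <= 1.
  by apply/andP; split; [apply: le_trans (ltW beta_gt); rewrite mulr_ge0 ?sqrtr_ge0 | lra].
apply: (diag_problem_notin beta01 (gap_below_amplitude alpha_gt0 beta_lt1 beta_gt)).
by rewrite same_class; apply: diag_problem_in.
Qed.
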